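(* Let $L$ be a nonassociative code loop and let $x\in L$ with $x^2=-1$. If the elementary mapping $\tau_x$ is a half-automorphism of $L$, then $x\notin N(L)$.
   Context: A code loop is a finite Moufang loop (loop satisfying $(x\cdot zx)y=x(z\cdot xy)$) with a unique nontrivial square, denoted $-1$. $N(L)$ denotes the nucleus of $L$, the set of elements $a$ with $(a,y,z)=(y,a,z)=(y,z,a)=1$ for all $y,z$, where the associator is defined by $(xy)z=(x(yz))(x,y,z)$. A half-automorphism is a bijection $f$ with $f(xy)\in\{f(x)f(y),f(y)f(x)\}$ for all $x,y$. For $c\in L$, $\tau_c(y)=y^{-1}$ if $y\in\{c,c^{-1}\}$ and $\tau_c(y)=y$ otherwise. *)

From mathcomp Require Import all_boot.
Set Implicit Arguments. Unset Strict Implicit. Unset Printing Implicit Defensive.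

(* A finite magma (T, mul) with element e is a loop: e is a two-sided
   identity and all left/right translations are injective (hence bijective,
   T being finite). *)
Definition is_loop (T : finType) (mul : T -> T -> T) (e : T) : Prop :=
  (forall x, mul e x = x) /\ (forall x, mul x e = x) /\
  (forall a, injective (mul a)) /\ (forall a, injective (fun x => mul x a)).

Definition moufang (T : Type) (mul : T -> T -> T) : Prop :=
  forall x y z, mul (mul x (mul z x)) y = mul x (mul z (mul x y)).

(* Code loop: finite Moufang loop with a unique nontrivial square m1 (= -1). *)
Definition code_loop (T : finType) (mul : T -> T -> T) (e m1 : T) : Prop :=
  is_loop mul e /\ moufang mul /\ m1 <> e /\
  (exists y, mul y y = m1) /\
  (forall y, mul y y <> e -> mul y y = m1).

Definition nonassociative (T : Type) (mul : T -> T -> T) : Prop :=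
  exists x y z, mul (mul x y) z <> mul x (mul y z).

(* a in N(L): all associators (a,y,z), (y,a,z), (y,z,a) equal 1, where
   (xy)z = (x(yz))(x,y,z); i.e. the corresponding triples associate. *)
Definition in_nucleus (T : Type) (mul : T -> T -> T) (a : T) : Prop :=
  forall y z, mul (mul a y) z = mul a (mul y z) /\
              mul (mul y a) z = mul y (mul a z) /\
              mul (mul y z) a = mul y (mul z a).

Definition linv (T : finType) (mul : T -> T -> T) (e y : T) : T :=
  odflt y [pick z | mul y z == e].

Definition tau (T : finType) (mul : T -> T -> T) (e c : T) (y : T) : T :=
  if (y == c) || (y == linv mul e c) then linv mul e y else y.

Definition half_automorphism (T : Type) (mul : T -> T -> T) (f : T -> T) : Prop :=
  bijective f /\ forall x y, f (mul x y) = mul (f x) (f y) \/ f (mul x y) = mul (f y) (f x).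

(* Since x is nuclear, so is its inverse i, and u = i(xu) is nuclear
   whenever xu is.  Hence for y outside the nucleus the
   half-automorphism tau_x fixes y and xy while sending x to i, so
   xy is iy or yi; the first would force x = i, i.e. x^2 = 1, so xy = yi.
   A nonassociative triple (a, b, c) yields a, b and ab outside the nucleus
   (the last by the left inverse property of Moufang loops), and then
   a(ib) = (ai)b = (xa)b = x(ab) = (ab)i = a(bi) = a(xb), whence i = x. *)

From mathcomp Require Import all_boot.

Set Implicit Arguments.
Unset Strict Implicit.

Section Loop.
Variables (T : finType) (mul : T -> T -> T) (e : T).
Hypothesis loopL : is_loop mul e.
Local Notation "a ** b" := (mul a b) (at level 40, left associativity).
Local Notation N := (in_nucleus mul).
Local Notation inv := (linv mul e).

Lemma mul1l y : e ** y = y. Proof. by case: loopL. Qed.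
Lemma mulr1 y : y ** e = y. Proof. by case: loopL => _ []. Qed.

Lemma mulIl a : injective (mul a). Proof. by case: loopL => _ [_ []]. Qed.
Lemma mulIr a : injective (mul^~ a). Proof. by case: loopL => _ [_ []]. Qed.

Lemma mul_surjr a w : exists u, u ** a = w.
Proof. by have [g _ gK] := injF_bij (@mulIr a); exists (g w); rewrite (gK w). Qed.

Lemma mulrV y : y ** inv y = e.
Proof.
rewrite /linv; case: pickP => [z /eqP // | no_inv].
have [g _ gK] := injF_bij (@mulIl y).
by have := no_inv (g e); rewrite gK eqxx.
Qed.

Lemma nucleusM a b : N a -> N b -> N (a ** b).
Proof.
move=> Na Nb y z; split; [|split].
- by rewrite (Na b y).1 (Na (b ** y) z).1 (Nb y z).1 (Na b (y ** z)).1.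
- by rewrite -(Nb y a).2.2 (Nb (y ** a) z).2.1 (Na y (b ** z)).2.1 (Na b z).1.
- by rewrite -(Nb (y ** z) a).2.2 (Na y z).2.2 (Nb y (z ** a)).2.2 (Nb z a).2.2.
Qed.

Section NuclearElement.
Variable x : T.
Hypothesis Nx : N x.

Lemma nucleus_mulVr : inv x ** x = e.
Proof. by apply: (@mulIl x); rewrite -(Nx _ x).1 mulrV mul1l mulr1. Qed.

Lemma nucleus_mulKl y : inv x ** (x ** y) = y.
Proof. by rewrite -(Nx _ y).2.1 nucleus_mulVr mul1l. Qed.

Lemma nucleus_mulKr y : x ** (inv x ** y) = y.
Proof. by rewrite -(Nx _ y).1 mulrV mul1l. Qed.

Lemma nucleusV : N (inv x).
Proof.
move=> y z; split; [|split].
- apply: (@mulIl x).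
  by rewrite -(Nx _ z).1 !nucleus_mulKr.
- rewrite -{1}(nucleus_mulKr z) -(Nx (y ** inv x) _).2.1 (Nx y _).2.2.
  by rewrite nucleus_mulVr mulr1.
- apply: (@mulIr x).
  by rewrite (Nx _ (inv x)).2.2 nucleus_mulVr mulr1 (Nx y _).2.2 (Nx z _).2.2
    nucleus_mulVr mulr1.
Qed.

Lemma nucleus_mulIl y : N (x ** y) -> N y.
Proof. by move=> Nxy; rewrite -(nucleus_mulKl y); apply: nucleusM nucleusV Nxy. Qed.

End NuclearElement.

Lemma moufang_mulKl : moufang mul -> forall a, exists l, forall y, l ** (a ** y) = y.
Proof.
move=> mouf a; have [l la] := mul_surjr a e.
by exists l => y; apply: (@mulIl a); rewrite -mouf la mulr1.
Qed.

Lemma moufang_nucleus_assoc : moufang mul ->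
  forall a b c, N (a ** b) -> a ** b ** c = a ** (b ** c).
Proof.
move=> mouf a b c Nab; have [l lK] := moufang_mulKl mouf a.
rewrite -{2}(lK b) (Nab l c).2.1.
by apply: (@mulIl l); rewrite lK.
Qed.

Section HalfAutomorphism.
Variable x : T.
Hypotheses (Nx : N x) (x_neq_inv : x <> inv x).
Hypothesis tau_half : half_automorphism mul (tau mul e x).

Lemma tau_fixed y : ~ N y -> tau mul e x y = y.
Proof.
move=> Ny; have yx : y <> x by move=> yx; apply: Ny; rewrite yx.
have yV : y <> inv x by move=> yV; apply: Ny; rewrite yV; apply: nucleusV.
by rewrite /tau; do 2 case: eqP.
Qed.

Lemma half_aut_twist y : ~ N y -> x ** y = y ** inv x.
Proof.
move=> Ny; have Nxy : ~ N (x ** y) by move/(nucleus_mulIl Nx).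
have tau_x : tau mul e x x = inv x by rewrite /tau eqxx.
case: (tau_half.2 x y); rewrite (tau_fixed Nxy) tau_x tau_fixed // => xy.
by case: x_neq_inv; apply: (@mulIr y).
Qed.

Lemma half_aut_nucleus_assoc a b c :
  ~ N a -> ~ N b -> ~ N (a ** b) -> a ** b ** c = a ** (b ** c).
Proof.
move=> Na Nb Nab; exfalso; apply: x_neq_inv; apply: (@mulIr b); apply: (@mulIl a).
have Ni := nucleusV Nx.
rewrite half_aut_twist // -(Ni a b).2.2 -half_aut_twist // -(Nx a b).1.
by rewrite half_aut_twist // (Ni a b).2.1.
Qed.

End HalfAutomorphism.
End Loop.

Theorem corollary5p3 (T : finType) (mul : T -> T -> T) (e m1 : T) :
  code_loop mul e m1 -> nonassociative mul ->
  forall x : T, mul x x = m1 ->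
  half_automorphism mul (tau mul e x) ->
  ~ in_nucleus mul x.
Proof.
move=> [loopL [mouf [m1_neq_e _]]] [a [b [c nonassoc]]] x xx tau_half Nx.
have x_neq_inv : x <> linv mul e x.
  by move=> xV; apply: m1_neq_e; rewrite -xx {2}xV mulrV.
have Na : ~ in_nucleus mul a by move=> Na; apply: nonassoc; apply: (Na b c).1.
have Nb : ~ in_nucleus mul b by move=> Nb; apply: nonassoc; apply: (Nb a c).2.1.
have Nab : ~ in_nucleus mul (mul a b).
  by move=> Nab; apply: nonassoc; exact: (moufang_nucleus_assoc loopL mouf).
by apply: nonassoc; apply: (half_aut_nucleus_assoc loopL Nx).
Qed.
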